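(* Let $H$ be a connected graph, let $r\ge 2$, and let $G=H\circ rK_1$. Then $T\subseteq V(G)$ is a $\operatorname{Z}$-irrelevant set of $G$ if and only if $T\subseteq V(H)$.
   Context: Zero forcing on a graph $G$: starting with a set $S$ of blue vertices (others white), a blue vertex $v$ may change a white vertex $w$ to blue if $w$ is the only white neighbor of $v$; $S$ is a zero forcing set if repeated application colors all of $V(G)$ blue. A vertex $v$ is $\operatorname{Z}$-irrelevant if $v$ belongs to no minimal (under inclusion) zero forcing set of $G$; a set is $\operatorname{Z}$-irrelevant if all its vertices are. $rK_1$ is the graph of $r$ isolated vertices. The corona $H\circ F$ is obtained from $H$ by taking, for each $v\in V(H)$, a disjoint copy $F_v$ of $F$ and joining $v$ to every vertex of $F_v$; thus $H\circ rK_1$ attaches $r$ pendant leaves to each vertex of $H$. *)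

From mathcomp Require Import all_boot.
Set Implicit Arguments. Unset Strict Implicit. Unset Printing Implicit Defensive.

Definition simple_graph (T : finType) (e : rel T) : Prop :=
  symmetric e /\ irreflexive e.

Definition connected_graph (T : finType) (e : rel T) : Prop :=
  (0 < #|T|) /\ forall u v : T, connect e u v.

Section ZeroForcing.
Variables (T : finType) (e : rel T).

(* One round of the color-change rule applied in parallel: a white vertex w
   turns blue if some blue v has w as its only white neighbour. *)
Definition force_step (S : {set T}) : {set T} :=
  S :|: [set w | [exists v, (v \in S) && e v w &&
                   [forall u, e v u ==> (u \in S) || (u == w)]]].

(* Final coloring: repeated application (#|T| rounds suffice to stabilize). *)
Definition zf_closure (S : {set T}) : {set T} := iter #|T| force_step S.

Definition zero_forcing_set (S : {set T}) : bool := zf_closure S == setT.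

Definition minimal_zf_set (S : {set T}) : bool := minset zero_forcing_set S.

Definition Z_irrelevant_vertex (v : T) : Prop :=
  forall S : {set T}, minimal_zf_set S -> v \notin S.

Definition Z_irrelevant_set (X : {set T}) : Prop :=
  forall v, v \in X -> Z_irrelevant_vertex v.
End ZeroForcing.

(* Corona H o rK_1: vertices inl v (v in V(H)) and inr (v, i) (the i-th
   pendant leaf attached to v). *)
Definition corona_vertex (V : finType) (r : nat) : finType :=
  (V + (V * 'I_r))%type.

Arguments corona_vertex : clear implicits.
Definition corona_rK1 (V : finType) (e : rel V) (r : nat)
  : rel (corona_vertex V r) :=
  fun x y =>
    match x, y with
    | inl u, inl v => e u v
    | inl u, inr (v, _) => u == v
    | inr (u, _), inl v => u == v
    | inr _, inr _ => false
    end.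

Definition base_vertices (V : finType) (r : nat) : {set corona_vertex V r} :=
  [set x | if x is inl _ then true else false].
Arguments corona_rK1 {V} e r.
Arguments Z_irrelevant_set {T} e X.

(* In the corona every vertex u of H carries r >= 2 pendant leaves, and any two
   of them form a fort: their only outside neighbour u sees both, so neither
   can ever be forced.  Hence every zero forcing set contains all but at most
   one leaf of each u.  If a minimal zero forcing set S contained u, one of
   the leaves of u in S would force u, so S minus u would still be zero
   forcing; thus the vertices of H are irrelevant.  Conversely, for a fixed
   index c, the leaves with index different from c force every u and then the
   remaining leaf of u, and by the fort property no proper subset does, so
   every leaf lies in a minimal zero forcing set. *)

From mathcomp Require Import all_boot.
Set Implicit Arguments. Unset Strict Implicit. Unset Printing Implicit Defensive.

Section ZeroForcingTheory.
Variables (T : finType) (e : rel T).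
Local Notation fs := (force_step e).

Lemma subset_force_step (X : {set T}) : X \subset fs X.
Proof. exact: subsetUl. Qed.

Lemma force_stepS (X Y : {set T}) : X \subset Y -> fs X \subset fs Y.
Proof.
move=> sXY; apply: setUSS => //; apply/subsetP => w; rewrite !inE.
case/existsP=> v /andP[/andP[vX evw] /forallP allv]; apply/existsP; exists v.
rewrite (subsetP sXY v vX) evw; apply/forallP => u; apply/implyP => evu.
by case/orP: (implyP (allv u) evu) => [/(subsetP sXY)->|->]; rewrite ?orbT.
Qed.

Lemma mem_force_step (X : {set T}) v w : v \in X -> e v w ->
  (forall u, e v u -> (u \in X) || (u == w)) -> w \in fs X.
Proof.
move=> vX evw allv; rewrite inE; apply/orP; right; rewrite inE.
by apply/existsP; exists v; rewrite vX evw; apply/forallP => u; apply/implyP/allv.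
Qed.

Lemma subset_zf_closure (X : {set T}) : X \subset zf_closure e X.
Proof.
rewrite /zf_closure; elim: #|T| => //= k IHk.
exact: subset_trans IHk (subset_force_step _).
Qed.

Lemma zf_closureS (X Y : {set T}) : X \subset Y -> zf_closure e X \subset zf_closure e Y.
Proof. by rewrite /zf_closure; elim: #|T| => //= k IHk /IHk /force_stepS. Qed.

(* Each round that changes the set adds a vertex, so #|T| rounds reach a fixpoint. *)
Lemma force_step_zf_closure (X : {set T}) : fs (zf_closure e X) = zf_closure e X.
Proof.
have grow k : (k <= #|iter k fs X|) || (fs (iter k fs X) == iter k fs X).
  elim: k => [// | k IHk]; rewrite [iter k.+1 _ _]/=.
  have [fixk | changed] := eqVneq (fs (iter k fs X)) (iter k fs X).
    by rewrite !fixk eqxx orbT.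
  move: IHk; rewrite (negbTE changed) orbF => IHk.
  suff /proper_card : iter k fs X \proper fs (iter k fs X).
    by move/(leq_ltn_trans IHk) ->.
  by rewrite properEneq eq_sym changed subset_force_step.
rewrite /zf_closure; case/orP: (grow #|T|) => [full | /eqP //].
have -> : iter #|T| fs X = setT by apply/eqP; rewrite eqEcard subsetT cardsT.
by apply/eqP; rewrite eqEsubset subsetT subset_force_step.
Qed.

Lemma zf_closure_id (X : {set T}) : zf_closure e (zf_closure e X) = zf_closure e X.
Proof. exact/iter_fix/force_step_zf_closure. Qed.

Lemma force_step_sub_zf_closure (X Y : {set T}) :
  X \subset zf_closure e Y -> fs X \subset zf_closure e Y.
Proof. by move/force_stepS; rewrite force_step_zf_closure. Qed.

Lemma zero_forcing_setP (S : {set T}) :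
  reflect (setT \subset zf_closure e S) (zero_forcing_set e S).
Proof. by rewrite /zero_forcing_set eqEsubset subsetT; apply: idP. Qed.

Lemma zero_forcing_set_sub_closure (X Y : {set T}) :
  X \subset zf_closure e Y -> zero_forcing_set e X -> zero_forcing_set e Y.
Proof.
move=> sXY /zero_forcing_setP zX; apply/zero_forcing_setP.
by rewrite -zf_closure_id; apply: subset_trans zX (zf_closureS sXY).
Qed.

Definition fort (F : {set T}) : Prop :=
  F != set0 /\ forall v w, v \notin F -> w \in F -> e v w ->
    exists2 w', w' \in F & (w' != w) && e v w'.

Lemma disjoint_force_step_fort (F X : {set T}) :
  fort F -> [disjoint F & X] -> [disjoint F & fs X].
Proof.
move=> [_ fortF] dFX; rewrite disjoint_sym disjoints_subset; apply/subsetP => w.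
rewrite !inE => /orP[wX | /existsP[v /andP[/andP[vX evw] /forallP allv]]].
  by rewrite (disjointFl dFX wX).
apply/negP => wF.
have [w' w'F /andP[w'w evw']] := fortF v w (negbT (disjointFl dFX vX)) wF evw.
case/orP: (implyP (allv w') evw') => [w'X | w'_eq_w]; last by rewrite w'_eq_w in w'w.
by rewrite (disjointFr dFX w'F) in w'X.
Qed.

Lemma zero_forcing_set_meets_fort (F S : {set T}) :
  fort F -> zero_forcing_set e S -> ~~ [disjoint F & S].
Proof.
move=> fortF /eqP zS; apply/negP => dFS; have /set0Pn[x xF] := fortF.1.
suff : [disjoint F & zf_closure e S] by rewrite zS => /disjointFr/(_ xF); rewrite inE.
rewrite /zf_closure; elim: #|T| => [// | k IHk].
exact: disjoint_force_step_fort fortF IHk.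
Qed.

End ZeroForcingTheory.

Lemma exists_ord_neq r (i : 'I_r) : 1 < r -> exists j : 'I_r, j != i.
Proof.
move=> r_gt1; have /set0Pn[j] : [set~ i] != set0.
  by rewrite -card_gt0 cardsC1 card_ord -ltnS (ltn_predK r_gt1).
by rewrite !inE; exists j.
Qed.

Section Corona.
Variables (V : finType) (e : rel V) (r : nat).
Local Notation CV := (corona_vertex V r).
Local Notation G := (corona_rK1 e r).

Definition leaf (u : V) (i : 'I_r) : CV := inr (u, i).

Lemma leaf_inj u : injective (leaf u).
Proof. by move=> i j [->]. Qed.

Lemma leaf_pair_fort u (i j : 'I_r) : i != j -> fort G [set leaf u i; leaf u j].
Proof.
move=> ij; split; first by apply/set0Pn; exists (leaf u i); rewrite !inE eqxx.
move=> v w vF; rewrite !inE => /orP[] /eqP -> {w}; case: v vF => [u' | [u' k]] //= _ /eqP ->.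
  exists (leaf u j); first by rewrite !inE eqxx orbT.
  by rewrite (inj_eq (@leaf_inj u)) eq_sym ij /= eqxx.
exists (leaf u i); first by rewrite !inE eqxx.
by rewrite (inj_eq (@leaf_inj u)) ij /= eqxx.
Qed.

Lemma zero_forcing_set_leaves (S : {set CV}) u (i j : 'I_r) :
  zero_forcing_set G S -> i != j -> (leaf u i \in S) || (leaf u j \in S).
Proof.
move=> zS /(leaf_pair_fort u)/zero_forcing_set_meets_fort/(_ zS).
by case/existsP=> x; rewrite !inE => /andP[/orP[]/eqP-> ->]; rewrite ?orbT.
Qed.

Lemma base_vertex_Z_irrelevant v : 1 < r -> Z_irrelevant_vertex G (inl v).
Proof.
move=> r_gt1 S /minsetP[zS minS]; apply/negP => vS.
have [j jS] : exists j, leaf v j \in S.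
  have i0_neq_i1 : Ordinal (ltnW r_gt1) != Ordinal r_gt1 :> 'I_r by [].
  by case/orP: (zero_forcing_set_leaves v zS i0_neq_i1) => inS; eexists; exact: inS.
have forced : S \subset force_step G (S :\ inl v).
  apply/subsetP => x xS; have [-> | xv] := eqVneq x (inl v); last first.
    by apply/(subsetP (subset_force_step _ _)); rewrite !inE xv.
  apply: (mem_force_step (v := leaf v j)); rewrite ?inE ?jS //= ?eqxx //.
  by case=> [u /eqP -> | //]; rewrite eqxx orbT.
have zSv : zero_forcing_set G (S :\ inl v).
  apply: zero_forcing_set_sub_closure zS; apply: subset_trans forced _.
  exact/force_step_sub_zf_closure/subset_zf_closure.
by have := minS _ zSv (subsetDl _ _); move/setP/(_ (inl v)); rewrite !inE vS eqxx.
Qed.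

Definition leaves_except (c : 'I_r) : {set CV} :=
  [set x | if x is inr (_, i) then i != c else false].

Lemma leaves_except_zero_forcing (c : 'I_r) : 1 < r -> zero_forcing_set G (leaves_except c).
Proof.
move=> r_gt1; have [j jc] := exists_ord_neq c r_gt1.
set S := leaves_except c.
have base u : inl u \in force_step G S.
  apply: (mem_force_step (v := leaf u j)); rewrite ?inE //= ?eqxx //.
  by case=> [w /eqP -> | //]; rewrite eqxx orbT.
have two_rounds : force_step G (force_step G S) \subset zf_closure G S.
  exact/force_step_sub_zf_closure/force_step_sub_zf_closure/subset_zf_closure.
apply/zero_forcing_setP/subsetP => x _; apply: (subsetP two_rounds).
case: x => [u | [u i]]; first exact/(subsetP (subset_force_step _ _))/base.
have [-> {i} | ic] := eqVneq i c; last first.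
  by do 2 apply/(subsetP (subset_force_step _ _)); rewrite inE.
apply: (mem_force_step (v := inl u)); rewrite ?base //= ?eqxx //.
case=> [w _ | [w k] /= /eqP <-]; first by rewrite base.
have [-> | kc] := eqVneq k c; first by rewrite eqxx orbT.
by rewrite (subsetP (subset_force_step _ _)) // inE.
Qed.

Lemma leaves_except_minimal (c : 'I_r) : 1 < r -> minimal_zf_set G (leaves_except c).
Proof.
move=> r_gt1; apply/minsetP; split; first exact: leaves_except_zero_forcing.
move=> B zB sBS; apply/eqP; rewrite eqEsubset sBS /=.
apply/subsetP => -[u | [u i]]; rewrite inE //= => ic.
case/orP: (zero_forcing_set_leaves u zB ic) => // /(subsetP sBS).
by rewrite inE /= eqxx.
Qed.

Lemma leaf_not_Z_irrelevant u i : 1 < r -> ~ Z_irrelevant_vertex G (leaf u i).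
Proof.
move=> r_gt1 irr; have [c ci] := exists_ord_neq i r_gt1.
by have := irr _ (leaves_except_minimal c r_gt1); rewrite inE /= eq_sym ci.
Qed.

End Corona.

Theorem proposition2p20 (V : finType) (e : rel V) (r : nat) :
  simple_graph e -> connected_graph e -> 2 <= r ->
  forall T : {set corona_vertex V r},
    Z_irrelevant_set (corona_rK1 e r) T <-> T \subset base_vertices V r.
Proof.
move=> _ _ r_gt1 T; split => [irrT | /subsetP sTbase x xT].
  apply/subsetP => -[u | [u i]] xT; first by rewrite inE.
  by case: (leaf_not_Z_irrelevant r_gt1 (irrT _ xT)).
by move: (sTbase x xT); rewrite inE; case: x xT => // v _ _; apply: base_vertex_Z_irrelevant.
Qed.
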